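(* Let $G$ be a simple undirected graph with vertices $v_1,\dots,v_n$ and let $G^d$ be a digraph whose underlying undirected graph is $G$ (an orientation of each edge of $G$), with edges $e_1,\dots,e_m$. Then the ideal $I(E)_{G^d}$ is generated by the binomials $f_C$, where $C$ ranges over the cycles of $G$.
   Context: $K$ is a field of characteristic zero; $[v_i,v_j]$ is the directed edge from $v_i$ to $v_j$. $I(E)_{G^d}=I(G^d,E)\cap K[e_1,\dots,e_m]$, where $I(G^d,E)\subseteq K[e_1,\dots,e_m,v_1,\dots,v_n,z_1,\dots,z_n]$ is generated by $e_h-z_iv_j$ for each edge $e_h=[v_i,v_j]$ of $G^d$ and $z_iv_i-1$, $i=1,\dots,n$. For a cycle $C$ of $G$ with vertices $v_{i(1)},\dots,v_{i(q)}$ (distinct) and edges $e_{h_1},\dots,e_{h_q}$, $e_{h_k}$ joining $v_{i(k)}$ and $v_{i(k+1)}$ ($v_{i(q+1)}=v_{i(1)}$), let $I$ be the set of $h_k$ with $e_{h_k}=[v_{i(k)},v_{i(k+1)}]$ in $G^d$ and $J$ the remaining indices; $f_C=\prod_{h\in I}e_h-\prod_{h\in J}e_h$ (empty product $=1$). *)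

From mathcomp Require Import all_boot all_order all_algebra.
From mathcomp Require Import mpoly.
Set Implicit Arguments. Unset Strict Implicit. Unset Printing Implicit Defensive.
Import GRing.Theory.
Local Open Scope ring_scope.

Definition in_ideal_gen (R : comRingType) (S : R -> Prop) (p : R) : Prop :=
  exists (k : nat) (a g : 'I_k -> R),
    (forall i, S (g i)) /\ p = \sum_(i < k) a i * g i.

(* A digraph G^d on vertices 'I_n with edges 'I_m: edge h is [v_(src h), v_(tgt h)]. *)
Definition simple_orientation (n m : nat) (src tgt : 'I_m -> 'I_n) : Prop :=
  (forall h, src h != tgt h) /\
  (forall h h', [set src h; tgt h] = [set src h'; tgt h'] -> h = h').

(* Variables of K[e_1..e_m, v_1..v_n, z_1..z_n], indexed by 'I_(m + (n + n)). *)
Section Vars.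
Context (K : fieldType) (n m : nat).
Definition NV := (m + (n + n))%N.
Definition evar (h : 'I_m) : {mpoly K[NV]} := 'X_(lshift (n + n) h).
Definition vvar (i : 'I_n) : {mpoly K[NV]} := 'X_(rshift m (lshift n i)).
Definition zvar (i : 'I_n) : {mpoly K[NV]} := 'X_(rshift m (rshift n i)).

Definition IGdE_gen (src tgt : 'I_m -> 'I_n) (f : {mpoly K[NV]}) : Prop :=
  (exists h, f = evar h - zvar (src h) * vvar (tgt h)) \/
  (exists i, f = zvar i * vvar i - 1).

Definition embedE (p : {mpoly K[m]}) : {mpoly K[NV]} :=
  mmap (fun c => c%:MP) evar p.

(* Membership in I(E)_{G^d} = I(G^d,E) ∩ K[e_1..e_m]. *)
Definition in_IE (src tgt : 'I_m -> 'I_n) (p : {mpoly K[m]}) : Prop :=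
  in_ideal_gen (IGdE_gen src tgt) (embedE p).

Definition is_cycle (src tgt : 'I_m -> 'I_n) (vs : seq 'I_n) (hs : seq 'I_m) : Prop :=
  [/\ (3 <= size vs)%N, size hs = size vs, uniq vs, uniq hs &
    forall k, (k < size vs)%N ->
      forall (h : 'I_m) (a b : 'I_n),
        nth h hs k = h -> nth a vs k = a -> nth a vs ((k.+1) %% size vs) = b ->
        [set src h; tgt h] = [set a; b]].

Definition fC (src tgt : 'I_m -> 'I_n) (vs : seq 'I_n) (hs : seq 'I_m) (h0 : 'I_m) (a0 : 'I_n)
  : {mpoly K[m]} :=
  let fwd k := (src (nth h0 hs k) == nth a0 vs k) &&
               (tgt (nth h0 hs k) == nth a0 vs ((k.+1) %% size vs)) in
  \prod_(k < size hs | fwd k) 'X_(nth h0 hs k)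
  - \prod_(k < size hs | ~~ fwd k) 'X_(nth h0 hs k).

Definition cycle_binomial (src tgt : 'I_m -> 'I_n) (f : {mpoly K[m]}) : Prop :=
  exists vs hs (h0 : 'I_m) (a0 : 'I_n), is_cycle src tgt vs hs /\ f = fC src tgt vs hs h0 a0.
End Vars.

From mathcomp Require Import all_boot all_order all_algebra.
From mathcomp Require Import mpoly.
From mathcomp Require Import ring zify.
Set Implicit Arguments. Unset Strict Implicit. Unset Printing Implicit Defensive.
Import GRing.Theory Num.Theory.
Local Open Scope ring_scope.

(* Modulo I(G^d, E) we have e_h = z_(src h) v_(tgt h) and z_i v_i = 1.  Along a
   cycle with vertices V_k put X_k = z_(V_k) v_(V_(k+1)): a forward edge is X_k, a
   backward edge is X_k^-1 and the product of all X_k is 1, so the two monomials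
   of f_C agree modulo I(G^d, E).

   Conversely, grade K[e, v, z] by Z^n, giving e_h, v_i and z_i the degrees
   tgt h - src h, i and -i.  The generators of I(G^d, E) are differences of
   monomials of equal degree, so if p lies in I(E)_{G^d} then in each degree the
   coefficients of p sum to 0, and p is a combination of balanced binomials
   e^a - e^b.  These lie in the cycle ideal by induction on the degree: a common
   variable factors out; otherwise orient the edges of a forwards and those of b
   backwards.  This digraph is balanced at every vertex, so following out-arcs
   closes a cycle C of G with f_C = e^F - e^B, F <= a, B <= b, and
   e^a - e^b = e^(a-F) f_C + e^B (e^(a-F) - e^(b-B)). *)

Section IdealGen.
Variables (R : comNzRingType) (S : R -> Prop).
Local Notation I := (in_ideal_gen S).

Lemma ideal_gen0 : I 0.
Proof. by exists 0%N, (fun=> 0), (fun=> 0); split; [case | rewrite big_ord0]. Qed.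

Lemma ideal_gen_mem g : S g -> I g.
Proof. by move=> Sg; exists 1%N, (fun=> 1), (fun=> g); rewrite big_ord1 mul1r. Qed.

Lemma ideal_genD p q : I p -> I q -> I (p + q).
Proof.
move=> [k1 [a1 [g1 [S1 ->]]]] [k2 [a2 [g2 [S2 ->]]]].
pose glue T (f1 : 'I_k1 -> T) (f2 : 'I_k2 -> T) i :=
  match split i with inl j => f1 j | inr j => f2 j end.
exists (k1 + k2)%N, (glue _ a1 a2), (glue _ g1 g2); split.
  by move=> i; rewrite /glue; case: (split i).
rewrite big_split_ord /glue; congr (_ + _); apply: eq_bigr => j _.
  by have := unsplitK (inl _ j) => /= ->.
by have := unsplitK (inr _ j) => /= ->.
Qed.

Lemma ideal_genMl r p : I p -> I (r * p).
Proof.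
move=> [k [a [g [Sg ->]]]]; exists k, (fun i => r * a i), g; split => //.
by rewrite mulr_sumr; apply: eq_bigr => i _; rewrite mulrA.
Qed.

Lemma ideal_gen_sum (T : Type) (r : seq T) (P : pred T) (F : T -> R) :
  (forall i, P i -> I (F i)) -> I (\sum_(i <- r | P i) F i).
Proof.
move=> IF; elim/big_rec: _ => [|i x Pi Ix]; first exact: ideal_gen0.
by apply: ideal_genD => //; apply: IF.
Qed.

Definition eqmod p q := I (p - q).

Lemma eqmod_refl p : eqmod p p.
Proof. by rewrite /eqmod subrr; apply: ideal_gen0. Qed.

Lemma eqmod_sym p q : eqmod p q -> eqmod q p.
Proof. by move=> /(ideal_genMl (-1)); rewrite /eqmod mulN1r opprB. Qed.

Lemma eqmod_trans p q r : eqmod p q -> eqmod q r -> eqmod p r.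
Proof. by move=> Ipq Iqr; have := ideal_genD Ipq Iqr; rewrite /eqmod addrA subrK. Qed.

Lemma eqmodM p1 q1 p2 q2 : eqmod p1 q1 -> eqmod p2 q2 -> eqmod (p1 * p2) (q1 * q2).
Proof.
move=> I1 I2; rewrite /eqmod.
have -> : p1 * p2 - q1 * q2 = p2 * (p1 - q1) + q1 * (p2 - q2) by ring.
by apply: ideal_genD; apply: ideal_genMl.
Qed.

Lemma eqmod_prod (T : Type) (r : seq T) (P : pred T) (F G : T -> R) :
  (forall i, P i -> eqmod (F i) (G i)) ->
  eqmod (\prod_(i <- r | P i) F i) (\prod_(i <- r | P i) G i).
Proof.
move=> FG; elim/big_rec2: _ => [|i x y Pi Hxy]; first exact: eqmod_refl.
by apply: eqmodM => //; apply: FG.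
Qed.

Lemma eqmod_prod1 (T : Type) (r : seq T) (P : pred T) (F : T -> R) :
  (forall i, P i -> eqmod (F i) 1) -> eqmod (\prod_(i <- r | P i) F i) 1.
Proof. by move=> F1; have := eqmod_prod r (G := fun=> 1) F1; rewrite big1_eq. Qed.

Lemma eqmod_prod_compl (T : Type) (r : seq T) (P : pred T) (X Y : T -> R) :
  eqmod (\prod_(i <- r) X i) 1 -> (forall i, eqmod (X i * Y i) 1) ->
  eqmod (\prod_(i <- r | P i) X i) (\prod_(i <- r | ~~ P i) Y i).
Proof.
move=> X1 XY1.
have XYc : eqmod (\prod_(i <- r | ~~ P i) (X i * Y i)) 1 by apply: eqmod_prod1.
apply: (@eqmod_trans _ ((\prod_(i <- r | P i) X i) * \prod_(i <- r | ~~ P i) (X i * Y i))).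
  by rewrite -[X in eqmod X _]mulr1; apply: eqmodM; [apply: eqmod_refl | apply: eqmod_sym].
rewrite big_split /= mulrA -[X in eqmod _ X]mul1r.
by apply: eqmodM; [rewrite (bigID P) in X1 | apply: eqmod_refl].
Qed.

End IdealGen.

Lemma ideal_gen_rmorph (R R' : comNzRingType) (f : {rmorphism R -> R'})
    (S : R -> Prop) (S' : R' -> Prop) (p : R) :
  (forall g, S g -> in_ideal_gen S' (f g)) -> in_ideal_gen S p -> in_ideal_gen S' (f p).
Proof.
move=> fS [k [c [g [Sg ->]]]]; rewrite rmorph_sum; apply: ideal_gen_sum => i _.
by rewrite rmorphM; apply/ideal_genMl/fS.
Qed.

Section CoefSum.
Variables (R : comNzRingType) (k : nat) (P : pred 'X_{1..k}).

Definition coef_sum (q : {mpoly R[k]}) : R := \sum_(mu <- msupp q | P mu) q@_mu.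

Lemma coef_sum_supset (s : seq 'X_{1..k}) q : uniq s -> {subset msupp q <= s} ->
  \sum_(mu <- s | P mu) q@_mu = coef_sum q.
Proof.
move=> s_uniq qs; rewrite (bigID (mem (msupp q))) /= [X in _ + X]big1 ?addr0; last first.
  by move=> mu /andP [_ /memN_msupp_eq0].
rewrite /coef_sum -[LHS]big_filter -[RHS]big_filter; apply/perm_big/uniq_perm.
- exact/filter_uniq.
- exact/filter_uniq/msupp_uniq.
move=> mu; rewrite !mem_filter.
by case: (boolP (mu \in msupp q)) => [/qs ->|]; rewrite ?andbT ?andbF.
Qed.

Lemma coef_sumD p q : coef_sum (p + q) = coef_sum p + coef_sum q.
Proof.
have sub_pq := @msuppD_le _ _ p q.
set s := undup (msupp p ++ msupp q).
have s_uniq : uniq s := undup_uniq _.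
rewrite -(@coef_sum_supset s (p + q)) -?(@coef_sum_supset s p) -?(@coef_sum_supset s q) //.
- by rewrite -big_split /=; apply: eq_bigr => mu _; rewrite mcoeffD.
- by move=> mu mu_q; rewrite mem_undup mem_cat mu_q orbT.
- by move=> mu mu_p; rewrite mem_undup mem_cat mu_p.
- by move=> mu /sub_pq; rewrite mem_undup.
Qed.

Lemma coef_sumZ c q : coef_sum (c *: q) = c * coef_sum q.
Proof.
rewrite -(@coef_sum_supset (msupp q) (c *: q)) ?msupp_uniq //; last exact: msuppZ_le.
by rewrite mulr_sumr; apply: eq_bigr => mu _; rewrite mcoeffZ.
Qed.

Lemma coef_sum_sum (T : Type) (r : seq T) (Q : pred T) (F : T -> {mpoly R[k]}) :
  coef_sum (\sum_(i <- r | Q i) F i) = \sum_(i <- r | Q i) coef_sum (F i).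
Proof.
have coef_sum0 : coef_sum 0 = 0 by rewrite /coef_sum msupp0 big_nil.
exact: (big_morph coef_sum coef_sumD coef_sum0).
Qed.

Lemma coef_sumX mu : coef_sum 'X_[mu] = (P mu)%:R.
Proof. by rewrite /coef_sum msuppX big_mkcond big_seq1 mcoeffX eqxx; case: (P mu). Qed.

Lemma coef_sum_mulXB q a b : (forall mu, P (mu + a)%MM = P (mu + b)%MM) ->
  coef_sum (q * ('X_[a] - 'X_[b])) = 0.
Proof.
move=> Pab; rewrite {1}(mpolyE q) mulr_suml coef_sum_sum big1 // => mu _.
rewrite -scalerAl coef_sumZ mulrBr -!mpolyXD coef_sumD -scaleN1r coef_sumZ !coef_sumX Pab.
by rewrite mulN1r subrr mulr0.
Qed.

Lemma coef_sum_ideal_gen (S : {mpoly R[k]} -> Prop) q :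
  (forall g, S g -> exists a b,
     g = 'X_[a] - 'X_[b] /\ forall mu, P (mu + a)%MM = P (mu + b)%MM) ->
  in_ideal_gen S q -> coef_sum q = 0.
Proof.
move=> S_binom [l [c [g [Sg ->]]]]; rewrite coef_sum_sum big1 // => i _.
by have [a [b [-> Pab]]] := S_binom _ (Sg i); apply: coef_sum_mulXB.
Qed.

End CoefSum.

(* Each monomial [a] of [p] is paired with a representative [r (w a)] of its
   fiber; the representatives then carry the fiber sums, which vanish. *)
Lemma ideal_gen_of_fiber_sums (R : comNzRingType) (k : nat) (T : eqType)
    (w : 'X_{1..k} -> T) (S : {mpoly R[k]} -> Prop) (p : {mpoly R[k]}) :
  (forall a b, w a = w b -> in_ideal_gen S ('X_[a] - 'X_[b])) ->
  (forall t, coef_sum (fun a => w a == t) p = 0) -> in_ideal_gen S p.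
Proof.
move=> S_binom fibers0; set s := msupp p.
pose r t := nth 0%MM s (find (fun a => w a == t) s).
have w_r a : a \in s -> w (r (w a)) = w a.
  by move=> a_s; apply/eqP/(@nth_find _ _ (fun b => w b == w a)); apply/hasP; exists a.
have reps0 : \sum_(a <- s) p@_a *: 'X_[r (w a)] = 0.
  transitivity (\sum_(t <- undup (map w s)) coef_sum (fun a => w a == t) p *: 'X_[r t]).
    rewrite (eq_bigr (fun t => \sum_(a <- s) (w a == t)%:R * p@_a *: 'X_[r t])); last first.
      move=> t _; rewrite /coef_sum big_mkcond scaler_suml; apply: eq_bigr => a _.
      by case: eqP; rewrite ?mul1r ?mul0r ?scale0r.
    rewrite exchange_big big_seq [RHS]big_seq; apply: eq_bigr => a a_s.
    rewrite (bigD1_seq (w a)) ?undup_uniq ?mem_undup ?map_f //= eqxx mul1r big1 ?addr0 //.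
    by move=> t /negbTE; rewrite eq_sym => ->; rewrite mul0r scale0r.
  by rewrite big1 // => t _; rewrite fibers0 scale0r.
have -> : p = \sum_(a <- s) p@_a *: ('X_[a] - 'X_[r (w a)]).
  by rewrite [LHS]mpolyE -/s (eq_bigr _ (fun a _ => scalerBr _ _ _)) sumrB reps0 subr0.
rewrite big_seq; apply: ideal_gen_sum => a a_s; rewrite -mul_mpolyC; apply: ideal_genMl.
by apply: S_binom; rewrite w_r.
Qed.

Section MonomialWeight.
Variables (V : nmodType) (k : nat) (w : 'I_k -> V).

Definition mnm_weight (mu : 'X_{1..k}) : V := \sum_(j < k) w j *+ mu j.

Lemma mnm_weight0 : mnm_weight 0%MM = 0.
Proof. by rewrite /mnm_weight big1 // => j _; rewrite mnm0E. Qed.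

Lemma mnm_weightD mu nu : mnm_weight (mu + nu)%MM = mnm_weight mu + mnm_weight nu.
Proof. by rewrite /mnm_weight -big_split; apply: eq_bigr => j _; rewrite mnmDE mulrnDr. Qed.

Lemma mnm_weightU j : mnm_weight U_(j)%MM = w j.
Proof.
rewrite /mnm_weight (bigD1 j) //= mnm1E eqxx big1 ?addr0 // => i /negbTE ij.
by rewrite mnm1E eq_sym ij.
Qed.

Lemma mnm_weight_sum (T : Type) (r : seq T) (P : pred T) (F : T -> 'X_{1..k}) :
  mnm_weight (\sum_(i <- r | P i) F i)%MM = \sum_(i <- r | P i) mnm_weight (F i).
Proof. exact: (big_morph mnm_weight mnm_weightD mnm_weight0). Qed.

Lemma mnm_weightMn mu c : mnm_weight (mu *+ c)%MM = mnm_weight mu *+ c.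
Proof. by elim: c => [|c IHc]; rewrite ?mulm0n ?mnm_weight0 // mulmS mnm_weightD IHc mulrS. Qed.

End MonomialWeight.

Lemma msum_mnm1_le (k : nat) (I : finType) (g : I -> 'I_k) (P : pred I) (c : 'X_{1..k}) :
  injective g -> (forall i, P i -> (0 < c (g i))%N) -> (\sum_(i | P i) U_(g i) <= c)%MM.
Proof.
move=> g_inj c_pos; apply/mnm_lepP => j; rewrite mnm_sumE.
case: (pickP (fun i => P i && (g i == j))) => [i /andP [Pi /eqP <-] | no_i]; last first.
  rewrite big1 // => i Pi; rewrite mnm1E; apply/eqP; rewrite eqb0.
  by apply/negP => gij; move: (no_i i); rewrite Pi gij.
rewrite (bigD1 i) //= mnm1E eqxx big1 ?addn0 ?c_pos // => i' /andP [_ i'i].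
by rewrite mnm1E (inj_eq g_inj) (negbTE i'i).
Qed.

Lemma set2_swap (T : finType) (x y a b : T) :
  [set x; y] = [set a; b] -> ~~ ((x == a) && (y == b)) -> x = b /\ y = a.
Proof.
move=> xy_ab; have /set2P x_ab : x \in [set a; b] by rewrite -xy_ab set21.
have /set2P y_ab : y \in [set a; b] by rewrite -xy_ab set22.
have /set2P a_xy : a \in [set x; y] by rewrite xy_ab set21.
have /set2P b_xy : b \in [set x; y] by rewrite xy_ab set22.
by case: x_ab y_ab a_xy b_xy => -> [] -> [] ? [] ?; subst; rewrite ?eqxx.
Qed.

Lemma big_ord_succ_mod (R : Type) (idx : R) (op : Monoid.com_law idx) (L : nat)
    (F : nat -> R) :
  \big[op/idx]_(k < L) F (k.+1 %% L)%N = \big[op/idx]_(k < L) F k.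
Proof. by rewrite [RHS](reindex_inj (@ordS_inj L)). Qed.

Lemma fcycle_in_closed (T : finType) (f : T -> T) (P : pred T) (x : T) :
  P x -> (forall y, P y -> P (f y)) ->
  exists c : seq T, [/\ (0 < size c)%N, uniq c, all P c &
    forall y0 k, (k < size c)%N -> nth y0 c (k.+1 %% size c) = f (nth y0 c k)].
Proof.
move=> Px Pf; have P_iter k y : P y -> P (iter k f y) by elim: k => //= k IHk /IHk /Pf.
have [j j_lt iter_j] : exists2 j, (j < order f x)%N & iter (order f x) f x = iter j f x.
  have x_N := fconnect_iter f (order f x) x.
  by exists (findex f x (iter (order f x) f x)); [exact: findex_max | rewrite iter_findex].
pose y := iter j f x.
have y_cycle : iter (order f y) f y = y.
  apply: (all_iffLR orbitPcycle 3%N 4%N); exists (order f x - j).-1.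
  rewrite prednK ?subn_gt0 // /y -iterD subnK; [exact: iter_j | exact: ltnW].
exists (orbit f y); split => //; rewrite ?size_orbit //.
  by apply/allP => z; rewrite -fconnect_orbit => /iter_findex <-; apply/P_iter/P_iter.
move=> y0 k k_lt; have k1_lt : (k.+1 %% order f y < order f y)%N by rewrite ltn_pmod.
rewrite !(set_nth_default y) ?size_orbit // !nth_traject //.
case: (ltngtP k.+1 (order f y)) => [k1_lt' | | k1_eq]; first by rewrite modn_small.
  by rewrite ltnNge k_lt.
by rewrite -{1}k1_eq modnn /= -iterS k1_eq y_cycle.
Qed.

Section Orientation.
Variables (K : fieldType) (n m : nat) (src tgt : 'I_m -> 'I_n).

Definition vtx_wt (t : 'I_n) : {ffun 'I_n -> int} := [ffun i => (t == i)%:R].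
Definition edge_wt (h : 'I_m) := vtx_wt (tgt h) - vtx_wt (src h).
Definition wt (a : 'X_{1..m}) := mnm_weight edge_wt a.

Definition var_wt (j : 'I_(NV n m)) : {ffun 'I_n -> int} :=
  match split j with
  | inl h => edge_wt h
  | inr j' => match split j' with inl t => vtx_wt t | inr s => - vtx_wt s end
  end.
Definition evz_wt (mu : 'X_{1..NV n m}) := mnm_weight var_wt mu.

Lemma var_wt_e h : var_wt (lshift (n + n) h) = edge_wt h.
Proof. by rewrite /var_wt (unsplitK (inl _ h) : split (lshift _ h) = _). Qed.

Lemma var_wt_v t : var_wt (rshift m (lshift n t)) = vtx_wt t.
Proof.
rewrite /var_wt (unsplitK (inr _ _) : split (rshift m _) = _).
by rewrite (unsplitK (inl _ t) : split (lshift n t) = _).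
Qed.

Lemma var_wt_z s : var_wt (rshift m (rshift n s)) = - vtx_wt s.
Proof.
rewrite /var_wt (unsplitK (inr _ _) : split (rshift m _) = _).
by rewrite (unsplitK (inr _ s) : split (rshift n s) = _).
Qed.

Lemma IGdE_gen_balanced g : IGdE_gen src tgt g ->
  exists a b, g = 'X_[a] - 'X_[b] :> {mpoly K[NV n m]} /\ evz_wt a = evz_wt b.
Proof.
case=> [[h ->] | [i ->]].
  exists U_(lshift (n + n) h)%MM,
         (U_(rshift m (rshift n (src h))) + U_(rshift m (lshift n (tgt h))))%MM.
  rewrite mpolyXD /evz_wt mnm_weightD !mnm_weightU var_wt_e var_wt_v var_wt_z.
  by split => //; rewrite addrC.
exists (U_(rshift m (rshift n i)) + U_(rshift m (lshift n i)))%MM, 0%MM.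
rewrite mpolyXD mpolyX0 /evz_wt mnm_weightD mnm_weight0 !mnm_weightU var_wt_v var_wt_z.
by split => //; rewrite addNr.
Qed.

Lemma mmap1_evar (a : 'X_{1..m}) :
  mmap1 (@evar K n m) a = 'X_[\sum_(h < m) U_(lshift (n + n) h) *+ a h]%MM.
Proof. exact: mprodXnE. Qed.

Lemma evz_wt_mmap1_evar (a : 'X_{1..m}) :
  evz_wt (\sum_(h < m) U_(lshift (n + n) h) *+ a h)%MM = wt a.
Proof.
rewrite /evz_wt mnm_weight_sum; apply: eq_bigr => h _.
by rewrite mnm_weightMn mnm_weightU var_wt_e.
Qed.

Lemma coef_sum_embedE (P : pred {ffun 'I_n -> int}) (p : {mpoly K[m]}) :
  coef_sum (fun mu => P (evz_wt mu)) (embedE n p) = coef_sum (fun a => P (wt a)) p.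
Proof.
rewrite /embedE /mmap coef_sum_sum /coef_sum [RHS]big_mkcond; apply: eq_bigr => a _.
rewrite mmap1_evar mul_mpolyC -/(coef_sum _ _) coef_sumZ coef_sumX evz_wt_mmap1_evar.
by case: (P (wt a)); rewrite ?mulr1 ?mulr0.
Qed.

Lemma in_IE_fiber_sums (p : {mpoly K[m]}) t :
  in_IE src tgt p -> coef_sum (fun a => wt a == t) p = 0.
Proof.
move=> IEp; rewrite -(coef_sum_embedE (pred1 t)); apply: coef_sum_ideal_gen IEp.
move=> g /IGdE_gen_balanced [a [b [-> wt_ab]]]; exists a, b; split => // mu.
by rewrite /= /evz_wt !mnm_weightD -/(evz_wt a) -/(evz_wt b) wt_ab.
Qed.

End Orientation.

Section Cycle.
Variables (n m : nat) (src tgt : 'I_m -> 'I_n).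
Variables (vs : seq 'I_n) (hs : seq 'I_m) (h0 : 'I_m) (a0 : 'I_n).

Definition cycle_fwd (k : nat) :=
  (src (nth h0 hs k) == nth a0 vs k) && (tgt (nth h0 hs k) == nth a0 vs (k.+1 %% size vs)).

Lemma fCE (K : fieldType) : fC K src tgt vs hs h0 a0 =
  \prod_(k < size hs | cycle_fwd k) 'X_(nth h0 hs k)
  - \prod_(k < size hs | ~~ cycle_fwd k) 'X_(nth h0 hs k).
Proof. by []. Qed.

Definition fwd_mnm := (\sum_(k < size hs | cycle_fwd k) U_(nth h0 hs k))%MM.
Definition bwd_mnm := (\sum_(k < size hs | ~~ cycle_fwd k) U_(nth h0 hs k))%MM.

Lemma fC_mpolyX (K : fieldType) : fC K src tgt vs hs h0 a0 = 'X_[fwd_mnm] - 'X_[bwd_mnm].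
Proof. by rewrite fCE !mprodXE. Qed.

Hypothesis vs_hs_cycle : is_cycle src tgt vs hs.

Lemma cycle_edge_ends k : (k < size vs)%N ->
  [set src (nth h0 hs k); tgt (nth h0 hs k)] = [set nth a0 vs k; nth a0 vs (k.+1 %% size vs)].
Proof.
have [_ size_hs _ _ adj] := vs_hs_cycle; move=> k_lt.
apply: (adj k k_lt); apply: set_nth_default; rewrite ?size_hs //.
by rewrite ltn_pmod // (leq_ltn_trans _ k_lt).
Qed.

Lemma cycle_bwd_ends k : (k < size vs)%N -> ~~ cycle_fwd k ->
  src (nth h0 hs k) = nth a0 vs (k.+1 %% size vs) /\ tgt (nth h0 hs k) = nth a0 vs k.
Proof. by move=> /cycle_edge_ends; apply: set2_swap. Qed.

Lemma mdeg_fwd_bwd : (mdeg fwd_mnm + mdeg bwd_mnm)%N = size hs.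
Proof.
have -> : (mdeg fwd_mnm + mdeg bwd_mnm)%N = mdeg (\sum_(k < size hs) U_(nth h0 hs k))%MM.
  by rewrite -mdegD [in RHS](bigID (fun k : 'I_(size hs) => cycle_fwd k)).
rewrite mdeg_sum; under eq_bigr do rewrite mdeg1.
by rewrite sum1_card card_ord.
Qed.

Lemma nth_cycle_inj : injective (fun k : 'I_(size hs) => nth h0 hs k).
Proof.
have [_ _ _ hs_uniq _] := vs_hs_cycle.
by move=> k l /eqP; rewrite nth_uniq // => /eqP /val_inj.
Qed.

Lemma wt_fwd_bwd : wt src tgt fwd_mnm = wt src tgt bwd_mnm.
Proof.
have [_ size_hs _ _ _] := vs_hs_cycle.
pose g k := vtx_wt (nth a0 vs (k.+1 %% size vs)) - vtx_wt (nth a0 vs k).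
have wt_fwd (k : 'I_(size hs)) : cycle_fwd k -> edge_wt src tgt (nth h0 hs k) = g k.
  by case/andP => /eqP src_k /eqP tgt_k; rewrite /edge_wt src_k tgt_k.
have wt_bwd (k : 'I_(size hs)) : ~~ cycle_fwd k -> edge_wt src tgt (nth h0 hs k) = - g k.
  move=> bwd_k; have k_lt : (k < size vs)%N by rewrite -size_hs.
  rewrite /edge_wt; have [-> ->] := cycle_bwd_ends k_lt bwd_k.
  by rewrite opprB.
rewrite /wt !mnm_weight_sum.
under eq_bigr => k fwd_k do rewrite mnm_weightU wt_fwd //.
under [RHS]eq_bigr => k bwd_k do rewrite mnm_weightU wt_bwd //.
apply/eqP; rewrite sumrN -subr_eq0 opprK.
rewrite [X in X == 0](_ : _ = \sum_(k < size hs) g k); last first.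
  by rewrite [RHS](bigID (fun k : 'I_(size hs) => cycle_fwd k)).
rewrite /g sumrB size_hs.
by rewrite (big_ord_succ_mod _ _ (fun k => vtx_wt (nth a0 vs k))) subrr.
Qed.

End Cycle.

Section CycleBinomialInIE.
Variables (K : fieldType) (n m : nat) (src tgt : 'I_m -> 'I_n).
Local Notation eqmodI := (eqmod (IGdE_gen src tgt)).
Local Notation evar := (@evar K n m).
Local Notation vvar := (@vvar K n m).
Local Notation zvar := (@zvar K n m).

Lemma embedE_rmorph : @embedE K n m = mmap (@mpolyC (NV n m) K) evar.
Proof. by []. Qed.

Lemma evar_eqmod h : eqmodI (evar h) (zvar (src h) * vvar (tgt h)).
Proof. by apply: ideal_gen_mem; left; exists h. Qed.

Lemma zvar_vvar_eqmod i : eqmodI (zvar i * vvar i) 1.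
Proof. by apply: ideal_gen_mem; right; exists i. Qed.

Lemma fC_in_IE vs hs h0 a0 : is_cycle src tgt vs hs ->
  in_IE src tgt (fC K src tgt vs hs h0 a0).
Proof.
move=> cyc; have [_ size_hs _ _ _] := cyc.
rewrite /in_IE fCE embedE_rmorph rmorphB !rmorph_prod /=.
under eq_bigr do rewrite mmapX mmap1U.
under [X in _ - X]eq_bigr do rewrite mmapX mmap1U.
rewrite size_hs; set L := size vs.
pose V k := nth a0 vs k; pose H k := nth h0 hs k.
pose X k := zvar (V k) * vvar (V (k.+1 %% L)%N).
pose Y k := zvar (V (k.+1 %% L)%N) * vvar (V k).
apply: (@eqmod_trans _ _ _ (\prod_(k < L | cycle_fwd src tgt vs hs h0 a0 k) X k)).
  apply: eqmod_prod => k /andP [/eqP src_k /eqP tgt_k].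
  by have := evar_eqmod (H k); rewrite /H src_k tgt_k.
apply: (@eqmod_trans _ _ _ (\prod_(k < L | ~~ cycle_fwd src tgt vs hs h0 a0 k) Y k)); last first.
  apply/eqmod_sym/eqmod_prod => k bwd_k.
  have [src_k tgt_k] := cycle_bwd_ends cyc (ltn_ord k) bwd_k.
  by have := evar_eqmod (H k); rewrite /H src_k tgt_k.
apply: eqmod_prod_compl => [|k].
  rewrite big_split /= (big_ord_succ_mod _ _ (fun k => vvar (V k))) -big_split /=.
  by apply: eqmod_prod1 => k _; apply: zvar_vvar_eqmod.
have -> : X k * Y k =
    (zvar (V k) * vvar (V k)) * (zvar (V (k.+1 %% L)%N) * vvar (V (k.+1 %% L)%N)).
  by rewrite /X /Y; ring.
by rewrite -[X in eqmodI _ X]mulr1; apply: eqmodM; apply: zvar_vvar_eqmod.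
Qed.

Lemma in_IE_of_cycle_ideal (p : {mpoly K[m]}) :
  in_ideal_gen (cycle_binomial src tgt) p -> in_IE src tgt p.
Proof.
rewrite /in_IE embedE_rmorph; apply: ideal_gen_rmorph => _ [vs [hs [h0 [a0 [cyc ->]]]]].
exact: fC_in_IE.
Qed.

End CycleBinomialInIE.


Section BalancedCycle.
Variables (n m : nat) (src tgt : 'I_m -> 'I_n).
Hypothesis simple : simple_orientation src tgt.
Variables (a b : 'X_{1..m}).
Hypothesis wt_ab : wt src tgt a = wt src tgt b.
Hypothesis ab_disjoint : forall h, (a h == 0%N) || (b h == 0%N).
Variable h0 : 'I_m.

(* Arcs of the digraph with the edges of [a] oriented forwards and those of [b]
   backwards; [wt_ab] says that it is balanced at every vertex. *)
Definition out_arc x h := ((src h == x) && (0 < a h)%N) || ((tgt h == x) && (0 < b h)%N).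
Definition active x := [exists h, out_arc x h].
Definition out_edge x := odflt h0 [pick h | out_arc x h].
Definition succ x := if src (out_edge x) == x then tgt (out_edge x) else src (out_edge x).

Lemma out_arc_out_edge x : active x -> out_arc x (out_edge x).
Proof.
rewrite /out_edge; case: pickP => [h // | no_arc] /existsP [h arc_h].
by rewrite no_arc in arc_h.
Qed.

Lemma out_edge_fwd x : active x -> src (out_edge x) == x ->
  (0 < a (out_edge x))%N /\ succ x = tgt (out_edge x).
Proof.
move=> /out_arc_out_edge; rewrite /out_arc /succ => arc /[dup] src_x ->; split => //.
case/orP: arc => /andP [tgt_x b_pos] //; have [loopless _] := simple.
by move: (loopless (out_edge x)); rewrite (eqP src_x) (eqP tgt_x) eqxx.
Qed.

Lemma out_edge_bwd x : active x -> src (out_edge x) != x ->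
  [/\ (0 < b (out_edge x))%N, tgt (out_edge x) = x & succ x = src (out_edge x)].
Proof.
move=> /out_arc_out_edge; rewrite /out_arc /succ => arc /[dup] src_x /negbTE ->.
by case/orP: arc => /andP [/eqP tgt_x pos] //; rewrite tgt_x eqxx in src_x.
Qed.

Lemma succ_neq x : active x -> succ x != x.
Proof.
move=> act_x; have [loopless _] := simple.
case: (boolP (src (out_edge x) == x)) => [src_x | /(out_edge_bwd act_x) [_ _ ->] //].
have [_ ->] := out_edge_fwd act_x src_x.
by rewrite -[x in _ != x](eqP src_x) eq_sym.
Qed.

Lemma out_edge_ends x : active x -> [set src (out_edge x); tgt (out_edge x)] = [set x; succ x].
Proof.
move=> act_x; case: (boolP (src (out_edge x) == x)) => src_x.
  by have [_ ->] := out_edge_fwd act_x src_x; rewrite (eqP src_x).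
by have [_ -> ->] := out_edge_bwd act_x src_x; rewrite setUC.
Qed.

Lemma out_edge_inj : {in active &, injective out_edge}.
Proof.
move=> x y act_x act_y exy; have := ab_disjoint (out_edge x); rewrite !eqn0Ngt.
case: (boolP (src (out_edge x) == x)) => src_x.
  have [-> _] := out_edge_fwd act_x src_x.
  case: (boolP (src (out_edge y) == y)) => src_y.
    by rewrite -(eqP src_x) -(eqP src_y) exy.
  by have [b_pos _ _] := out_edge_bwd act_y src_y; rewrite exy b_pos.
have [-> tgt_x _] := out_edge_bwd act_x src_x; rewrite orbF.
case: (boolP (src (out_edge y) == y)) => src_y.
  by have [a_pos _] := out_edge_fwd act_y src_y; rewrite exy a_pos.
by have [_ tgt_y _] := out_edge_bwd act_y src_y; rewrite -tgt_x -tgt_y exy.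
Qed.

Lemma active_of_in_arc y h :
  ((tgt h == y) && (0 < a h)%N) || ((src h == y) && (0 < b h)%N) -> active y.
Proof.
move=> in_arc.
pose deg_in := (\sum_(h < m) ((tgt h == y) * a h + (src h == y) * b h))%N.
pose deg_out := (\sum_(h < m) ((src h == y) * a h + (tgt h == y) * b h))%N.
have deg_diff : deg_in%:R - deg_out%:R = wt src tgt a y - wt src tgt b y :> int.
  rewrite /deg_in /deg_out /wt /mnm_weight !sum_ffunE !natr_sum -!sumrB.
  by apply: eq_bigr => h' _; rewrite !ffunMnE !ffunE !mulrnBl -!mulrnA; ring.
have deg_eq : deg_in = deg_out.
  by apply/eqP; rewrite -(eqr_nat int) -subr_eq0 deg_diff wt_ab subrr.
have : (0 < deg_out)%N.
  rewrite -deg_eq /deg_in (bigD1 h) //= !addn_gt0 !muln_gt0 !lt0b.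
  by case/orP: in_arc => /andP [-> ->]; rewrite ?orbT.
rewrite lt0n sum_nat_eq0 => /forallPn [h' /=]; rewrite -lt0n addn_gt0 !muln_gt0 !lt0b => arc.
by apply/existsP; exists h'; rewrite /out_arc; case/orP: arc => /andP [-> ->]; rewrite ?orbT.
Qed.

Lemma active_succ x : active x -> active (succ x).
Proof.
move=> act_x; apply: (@active_of_in_arc _ (out_edge x)).
case: (boolP (src (out_edge x) == x)) => src_x.
  by have [a_pos ->] := out_edge_fwd act_x src_x; rewrite eqxx a_pos.
by have [b_pos _ ->] := out_edge_bwd act_x src_x; rewrite eqxx b_pos orbT.
Qed.

Section SuccCycle.
Variables (c : seq 'I_n) (x0 : 'I_n).
Hypotheses (c_uniq : uniq c) (c_active : all active c) (c_pos : (0 < size c)%N).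
Hypothesis c_succ :
  forall k, (k < size c)%N -> nth x0 c (k.+1 %% size c) = succ (nth x0 c k).

Let c_act k : (k < size c)%N -> active (nth x0 c k).
Proof. by move=> k_lt; apply: (allP c_active); apply: mem_nth. Qed.

Lemma succ_cycle_size : (2 < size c)%N.
Proof.
rewrite ltnNge; apply/negP => c_le2.
have [c1 | c2] : size c = 1%N \/ size c = 2%N by lia.
  have := c_succ c_pos; rewrite c1 modnn => fix0.
  by have := succ_neq (c_act c_pos); rewrite -fix0 eqxx.
have c1_pos : (1 < size c)%N by rewrite c2.
have succ0 := c_succ c_pos; have succ1 := c_succ c1_pos.
rewrite c2 /= in succ0 succ1; rewrite modnn in succ1.
have [_ simple_edges] := simple.
have same_edge : out_edge (nth x0 c 0) = out_edge (nth x0 c 1).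
  by apply: simple_edges; rewrite !out_edge_ends ?c_act // -succ0 -succ1 setUC.
have := out_edge_inj (c_act c_pos) (c_act c1_pos) same_edge.
by move/eqP; rewrite nth_uniq // c2.
Qed.

Lemma succ_cycle_is_cycle : is_cycle src tgt c (map out_edge c).
Proof.
split; rewrite ?size_map //; first exact: succ_cycle_size.
  rewrite map_inj_in_uniq // => x y /(allP c_active) act_x /(allP c_active) act_y.
  exact: out_edge_inj.
move=> k k_lt h u v <- <- <-.
rewrite (set_nth_default h0) ?size_map // (nth_map x0) // !(set_nth_default x0) ?ltn_pmod //.
by rewrite c_succ // out_edge_ends // c_act.
Qed.

Lemma succ_cycle_fwd k : (k < size c)%N ->
  cycle_fwd src tgt c (map out_edge c) h0 x0 k -> (0 < a (nth h0 (map out_edge c) k))%N.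
Proof.
move=> k_lt; rewrite /cycle_fwd (nth_map x0) // => /andP [src_k _].
by have [] := out_edge_fwd (c_act k_lt) src_k.
Qed.

Lemma succ_cycle_bwd k : (k < size c)%N ->
  ~~ cycle_fwd src tgt c (map out_edge c) h0 x0 k -> (0 < b (nth h0 (map out_edge c) k))%N.
Proof.
move=> k_lt; rewrite /cycle_fwd (nth_map x0) // c_succ //.
case: (boolP (src (out_edge (nth x0 c k)) == nth x0 c k)) => [src_k | src_k _].
  by have [_ <-] := out_edge_fwd (c_act k_lt) src_k; rewrite eqxx.
by have [] := out_edge_bwd (c_act k_lt) src_k.
Qed.

End SuccCycle.

Lemma balanced_cycle_exists x0 : active x0 ->
  exists vs, let hs := map out_edge vs in
  [/\ is_cycle src tgt vs hs,
      forall k, (k < size vs)%N -> cycle_fwd src tgt vs hs h0 x0 k ->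
        (0 < a (nth h0 hs k))%N &
      forall k, (k < size vs)%N -> ~~ cycle_fwd src tgt vs hs h0 x0 k ->
        (0 < b (nth h0 hs k))%N].
Proof.
move=> act_x0; have [c [c_pos c_uniq c_act c_succ]] := fcycle_in_closed act_x0 active_succ.
have c_succ0 := c_succ x0.
exists c; split; [exact: succ_cycle_is_cycle c_succ0 | exact: succ_cycle_fwd c_act |].
exact: succ_cycle_bwd c_act c_succ0.
Qed.

End BalancedCycle.

Section CycleIdeal.
Variables (K : fieldType) (n m : nat) (src tgt : 'I_m -> 'I_n).
Hypothesis simple : simple_orientation src tgt.
Local Notation J := (in_ideal_gen (@cycle_binomial K n m src tgt)).
Local Notation wt := (wt src tgt).

Definition binomial_reduces (a b : 'X_{1..m}) := exists a' b' q,
  [/\ wt a' = wt b', (mdeg a' + mdeg b' < mdeg a + mdeg b)%N &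
      J ('X_[a] - 'X_[b] - q * ('X_[a'] - 'X_[b']))].

Lemma common_var_reduces (a b : 'X_{1..m}) h : (0 < a h)%N -> (0 < b h)%N -> wt a = wt b ->
  binomial_reduces a b.
Proof.
move=> a_pos b_pos wt_ab.
have a_eq : a = (a - U_(h) + U_(h))%MM by rewrite submK // lep1mP -lt0n.
have b_eq : b = (b - U_(h) + U_(h))%MM by rewrite submK // lep1mP -lt0n.
exists (a - U_(h))%MM, (b - U_(h))%MM, 'X_[U_(h)]; split.
- by apply: (@addIr _ (wt U_(h))); rewrite /wt -!mnm_weightD -a_eq -b_eq.
- by rewrite {2}a_eq {2}b_eq !mdegD mdeg1; lia.
have -> : 'X_[a] - 'X_[b] - 'X_[U_(h)] * ('X_[a - U_(h)] - 'X_[b - U_(h)]) = 0 :> {mpoly K[m]}.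
  by rewrite {1}a_eq {1}b_eq !mpolyXD; ring.
exact: ideal_gen0.
Qed.

Lemma cycle_reduces (a b : 'X_{1..m}) h0 :
  wt a = wt b -> (forall h, (a h == 0%N) || (b h == 0%N)) ->
  (0 < a h0)%N || (0 < b h0)%N -> binomial_reduces a b.
Proof.
move=> wt_ab ab_disjoint h0_supp.
pose x0 := if (0 < a h0)%N then src h0 else tgt h0.
have act_x0 : active src tgt a b x0.
  apply/existsP; exists h0; rewrite /out_arc /x0.
  by case: ifP h0_supp => [a_pos _ | _ /= b_pos]; rewrite eqxx ?a_pos ?b_pos ?orbT.
have [vs [cyc fwd_a bwd_b]] := balanced_cycle_exists simple wt_ab ab_disjoint h0 act_x0.
set hs := map _ vs in cyc fwd_a bwd_b; have [size_ge3 size_hs _ _ _] := cyc.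
set F := fwd_mnm src tgt vs hs h0 x0; set B := bwd_mnm src tgt vs hs h0 x0.
have F_le : (F <= a)%MM.
  apply: (msum_mnm1_le (nth_cycle_inj cyc)) => i fwd_i.
  by apply: (fwd_a i) fwd_i; rewrite -size_hs.
have B_le : (B <= b)%MM.
  apply: (msum_mnm1_le (nth_cycle_inj cyc)) => i bwd_i.
  by apply: (bwd_b i) bwd_i; rewrite -size_hs.
have a_eq : a = (a - F + F)%MM by rewrite submK.
have b_eq : b = (b - B + B)%MM by rewrite submK.
exists (a - F)%MM, (b - B)%MM, 'X_[B]; split.
- apply: (@addIr _ (wt F)); rewrite [in RHS](wt_fwd_bwd h0 x0 cyc).
  by rewrite /wt -!mnm_weightD -a_eq -b_eq.
- have := mdeg_fwd_bwd src tgt vs hs h0 x0; rewrite -/F -/B {2}a_eq {2}b_eq !mdegD; lia.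
set f := fC K src tgt vs hs h0 x0.
have -> : 'X_[a] - 'X_[b] - 'X_[B] * ('X_[a - F] - 'X_[b - B]) = 'X_[a - F] * f :> {mpoly K[m]}.
  by rewrite /f fC_mpolyX -/F -/B {1}a_eq {1}b_eq !mpolyXD; ring.
by apply/ideal_genMl/ideal_gen_mem; exists vs, hs, h0, x0.
Qed.

Lemma balanced_binomial_in_ideal (a b : 'X_{1..m}) : wt a = wt b -> J ('X_[a] - 'X_[b]).
Proof.
have [N] := ubnP (mdeg a + mdeg b); elim: N a b => // N IHN a b deg_lt wt_ab.
have [[-> ->] | [a' [b' [q [wt_ab' deg_lt' J_rem]]]]] :
    (a = 0%MM /\ b = 0%MM) \/ binomial_reduces a b.
- case: (boolP [exists h, (0 < a h)%N && (0 < b h)%N]) => [|no_common].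
    case/existsP => h /andP [a_pos b_pos]; right.
    exact: (common_var_reduces a_pos b_pos wt_ab).
  case: (boolP [exists h, (0 < a h)%N || (0 < b h)%N]) => [|/existsPn no_supp].
    case/existsP => h0 supp.
    right; apply: cycle_reduces wt_ab _ supp => h.
    by move/existsPn: no_common => /(_ h); rewrite negb_and -!eqn0Ngt.
  left; split; apply/mnmP => h; move: (no_supp h); rewrite negb_or -!eqn0Ngt mnm0E.
    by case/andP => /eqP.
  by case/andP => _ /eqP.
- by rewrite subrr; apply: ideal_gen0.
rewrite -(subrK (q * ('X_[a'] - 'X_[b'])) ('X_[a] - 'X_[b])).
by apply: ideal_genD J_rem (ideal_genMl _ (IHN _ _ _ wt_ab')); lia.
Qed.

End CycleIdeal.

Unset Implicit Arguments.

Theorem corollary1 (K : fieldType) (charK0 : [pchar K] =i pred0)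
  (n m : nat) (src tgt : 'I_m -> 'I_n) :
  simple_orientation src tgt ->
  forall p : {mpoly K[m]},
    in_IE src tgt p <-> in_ideal_gen (cycle_binomial src tgt) p.
Proof.
move=> simple p; split; last exact: in_IE_of_cycle_ideal.
move=> IEp; apply: (ideal_gen_of_fiber_sums (w := wt src tgt)) => [a b | t].
  exact: balanced_binomial_in_ideal.
exact: in_IE_fiber_sums.
Qed.
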